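(* Let $m\ge1$, $q=2^m$, let $n$ be even, let $L$ be a $2$-linear polynomial over $\mathbb F_{q^n}$, and let $A\in\mathbb F_{q^n}^*$. Then $\mathrm{Tr}(x^{q+1})+L(x)$ is a permutation polynomial of $\mathbb F_{q^n}$ if and only if $\ker(\mathrm{Tr}_2\circ L^\prime)\subseteq\ker\mathrm{Tr}$ and $\ker L=\{0\}$. If $A^{\frac{q^n-1}{q+1}}\ne1$, then $\mathrm{Tr}(Ax^{q+1})+L(x)$ is not a permutation polynomial of $\mathbb F_{q^n}$.
   Context: $\mathrm{Tr}$ denotes the trace map of $\mathbb F_{q^n}$ over $\mathbb F_q$ and $\mathrm{Tr}_2$ the trace map of $\mathbb F_{q^n}$ over $\mathbb F_{q^2}$. A $2$-linear polynomial over $\mathbb F_{q^n}$ has the form $L(x)=\sum_{j=0}^{mn-1}a_jx^{2^j}$; its adjoint is $L^\prime(x)=\sum_j(a_jx)^{2^{-j}}$, where $y\mapsto y^{2^{-j}}$ is the inverse of $y\mapsto y^{2^j}$ on $\mathbb F_{q^n}$. Polynomials are regarded as maps on $\mathbb F_{q^n}$; $\ker$ denotes the kernel of an additive map. *)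

From HB Require Import structures.
From mathcomp Require Import all_boot all_order all_algebra all_field.
Set Implicit Arguments. Unset Strict Implicit. Unset Printing Implicit Defensive.
Import GRing.Theory.
Local Open Scope ring_scope.

Definition Tr (F : fieldType) (q n : nat) (x : F) : F :=
  \sum_(i < n) x ^+ (q ^ i).

Definition Tr2 (F : fieldType) (q n : nat) (x : F) : F :=
  \sum_(i < n./2) x ^+ ((q ^ 2) ^ i).

Definition lin2 (F : fieldType) (N : nat) (a : 'I_N -> F) (x : F) : F :=
  \sum_(j < N) a j * x ^+ (2 ^ j).

(* Adjoint L'(x) = sum_j (a_j x)^(2^{-j}); on a field of order 2^N the
   inverse of y |-> y^(2^j) (j < N) is y |-> y^(2^(N-j)). *)
Definition lin2_adj (F : fieldType) (N : nat) (a : 'I_N -> F) (x : F) : F :=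
  \sum_(j < N) (a j * x) ^+ (2 ^ (N - j)).

Definition kerF (F : finFieldType) (f : F -> F) : {set F} :=
  [set x | f x == 0].

From HB Require Import structures.
From mathcomp Require Import all_boot all_order all_algebra all_field.
From mathcomp Require Import zify ring.
Set Implicit Arguments.
Unset Strict Implicit.
Unset Printing Implicit Defensive.
Import GRing.Theory.
Local Open Scope ring_scope.

(* Write f(x) = Tr(A x^(q+1)) + L(x). As Tr is F_q-valued and invariant under
   the q-Frobenius, f(x + z) = f(x) + f(z) + Tr(x^q D(z)) with
   D(z) = A z + (A z^q)^q, and x |-> Tr(x^q D(z)) maps onto F_q once D(z) <> 0.
   Hence f is injective iff every z <> 0 with L(z) in F_q has D(z) = 0 and
   f(z) <> 0.
   For A = 1, D(z) = 0 means z in F_(q^2), where Tr(z^(q+1)) = n z^(q+1) = 0 as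
   n is even; so f permutes F iff ker L = 0 and L^-1(F_q) is contained in
   F_(q^2), and through the duality T(L(x) y) = T(x L'(y)) of the absolute
   trace T this inclusion is ker(Tr_2 o L') <= ker Tr.
   For general A, some z <> 0 has L(z) in F_q (L is singular or onto), and
   D(z) = 0 puts c = A z^(q+1) in F_q^*, so that
   A^((q^n-1)/(q+1)) = c^((q-1)(q^n-1)/(q^2-1)) / z^(q^n-1) = 1. *)

Lemma predn_exp_even (q n : nat) : ~~ odd n ->
  (q ^ n).-1 = (q.+1 * (q.-1 * \sum_(i < n./2) (q ^ 2) ^ i))%N.
Proof.
move=> n_even; rewrite -{1}(even_halfK n_even) -muln2.
rewrite mulnC expnM predn_exp (predn_exp q 2) !big_ord_recl big_ord0 /=.
by rewrite expn0 expn1 addn0 add1n mulnCA mulnA.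
Qed.

Lemma additive_inj (V W : zmodType) (f : V -> W) :
  {morph f : x y / x + y} -> (forall x, f x = 0 -> x = 0) -> injective f.
Proof.
move=> fD f_ker x y fxy; apply/eqP; rewrite -subr_eq0; apply/eqP/f_ker.
by apply: (addrI (f y)); rewrite -fD addrC subrK fxy addr0.
Qed.

Lemma kerF_additive_eq1 (F : finFieldType) (f : F -> F) :
  {morph f : x y / x + y} -> kerF f = [set 0] <-> injective f.
Proof.
move=> fD; have f0 : f 0 = 0 by apply: (addrI (f 0)); rewrite -fD !addr0.
split=> [ker_f | f_inj].
  by apply: additive_inj fD _ => x fx0; apply/set1P; rewrite -ker_f inE fx0.
apply/setP => x; rewrite !inE; apply/eqP/eqP => [fx0 | ->] //.
by apply: f_inj; rewrite fx0.
Qed.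

Lemma kerF_subsetP (F : finFieldType) (g h : F -> F) :
  reflect (forall x, g x = 0 -> h x = 0) (kerF g \subset kerF h).
Proof.
apply: (iffP subsetP) => [ker_sub x gx0 | ker_sub x].
  by apply/eqP; have := ker_sub x; rewrite !inE gx0 eqxx => /(_ isT).
by rewrite !inE => /eqP /ker_sub ->.
Qed.

Lemma expf_predn_eq1 (F : fieldType) (w : F) k :
  w != 0 -> (0 < k)%N -> w ^+ k = w -> w ^+ k.-1 = 1.
Proof. by move=> w_neq0 k_gt0 wk; apply: (mulfI w_neq0); rewrite mulr1 -exprS prednK. Qed.

Section Frobenius.

Variable F : finFieldType.
Hypothesis hchar : 2%N \in [pchar F].
Variable N : nat.
Hypothesis hcard : #|F| = (2 ^ N)%N.

Lemma frobD k (x y : F) : (x + y) ^+ (2 ^ k) = x ^+ (2 ^ k) + y ^+ (2 ^ k).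
Proof. by apply: exprDn_pchar; rewrite pnatX (pnatE _ (isT : prime 2)) hchar. Qed.

Lemma frob0 k : (0 : F) ^+ (2 ^ k) = 0.
Proof. by rewrite expr0n expn_eq0. Qed.

Lemma frob_sum k (I : Type) (r : seq I) (P : pred I) (g : I -> F) :
  (\sum_(i <- r | P i) g i) ^+ (2 ^ k) = \sum_(i <- r | P i) g i ^+ (2 ^ k).
Proof. exact: (big_morph (fun x : F => x ^+ (2 ^ k)) (frobD k) (frob0 k)). Qed.

Lemma frob_frob (x : F) a b : x ^+ (2 ^ a) ^+ (2 ^ b) = x ^+ (2 ^ (a + b)).
Proof. by rewrite -exprM -expnD. Qed.

Lemma frob_card (x : F) : x ^+ (2 ^ N) = x.
Proof. by rewrite -hcard expf_card. Qed.

Lemma frob_rootK k (y : F) : (k <= N)%N -> (y ^+ (2 ^ (N - k))) ^+ (2 ^ k) = y.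
Proof. by move=> k_le; rewrite frob_frob subnK ?frob_card. Qed.

Lemma frob_fixedM b (c : F) : c ^+ (2 ^ b) = c -> forall i, c ^+ (2 ^ (b * i)) = c.
Proof.
move=> c_fixed; elim=> [|i IHi]; first by rewrite muln0 expr1.
by rewrite mulnS -frob_frob c_fixed IHi.
Qed.

Lemma dim_gt0 : (0 < N)%N.
Proof.
have : (1 < #|F|)%N by apply/card_gt1P; exists 0, 1; rewrite eq_sym oner_neq0.
by rewrite hcard; case: N.
Qed.

Lemma factor_dim_le b s : (b * s = N)%N -> (b <= N)%N.
Proof.
by move=> hbs; have := dim_gt0; rewrite -hbs muln_gt0 => /andP[_ /(leq_pmulr b)].
Qed.

(* The trace of F onto its subfield of order 2^b, when b * s = N. *)
Definition trace b s (y : F) := \sum_(i < s) y ^+ (2 ^ (b * i)).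

Lemma traceD b s x y : trace b s (x + y) = trace b s x + trace b s y.
Proof. by rewrite /trace -big_split; apply: eq_bigr => i _; rewrite frobD. Qed.

Lemma trace0 b s : trace b s 0 = 0.
Proof. by rewrite /trace big1 // => i _; rewrite frob0. Qed.

Lemma trace_sum b s (I : Type) (r : seq I) (P : pred I) (g : I -> F) :
  trace b s (\sum_(i <- r | P i) g i) = \sum_(i <- r | P i) trace b s (g i).
Proof. exact: (big_morph (trace b s) (traceD b s) (trace0 b s)). Qed.

Lemma traceZ b s c y : c ^+ (2 ^ b) = c -> trace b s (c * y) = c * trace b s y.
Proof.
move=> c_fixed; rewrite /trace mulr_sumr; apply: eq_bigr => i _.
by rewrite exprMn (frob_fixedM c_fixed).
Qed.

Lemma trace_fixed b s c : c ^+ (2 ^ b) = c -> trace b s c = c *+ s.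
Proof.
move=> c_fixed; rewrite /trace (eq_bigr (fun _ => c)) ?sumr_const ?card_ord //.
by move=> i _; rewrite (frob_fixedM c_fixed).
Qed.

Section RelativeTrace.

Variables b s : nat.
Hypothesis hbs : (b * s = N)%N.

Lemma trace_frob y : trace b s (y ^+ (2 ^ b)) = trace b s y.
Proof.
rewrite /trace; case: s hbs => [|s'] hbs'; first by rewrite !big_ord0.
rewrite big_ord_recr big_ord_recl /= frob_frob -mulnS hbs' frob_card.
rewrite muln0 expr1 addrC; congr (_ + _); apply: eq_bigr => i _.
by rewrite frob_frob -mulnS.
Qed.

Lemma frob_trace y : trace b s y ^+ (2 ^ b) = trace b s y.
Proof.
rewrite -[RHS]trace_frob /trace frob_sum; apply: eq_bigr => i _.
by rewrite !frob_frob addnC.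
Qed.

End RelativeTrace.

Lemma trace_trans b s y : trace 1 b (trace b s y) = trace 1 (b * s) y.
Proof.
rewrite /trace.
transitivity (\sum_(k < b) \sum_(i < s) y ^+ (2 ^ (b * i + k))).
  apply: eq_bigr => k _; rewrite frob_sum.
  by apply: eq_bigr => i _; rewrite frob_frob mul1n.
rewrite exchange_big /= mulnC -(big_mkord xpredT (fun j => y ^+ (2 ^ (1 * j)))).
rewrite big_nat_mul big_mkord; apply: eq_bigr => i _.
rewrite -{1}(add0n (i * b)%N) big_addn mulSn addnK big_mkord.
by apply: eq_bigr => k _; rewrite !mul1n addnC mulnC.
Qed.

Lemma trace1_tower b s y : (b * s = N)%N -> trace 1 N y = trace 1 b (trace b s y).
Proof. by move=> <-; rewrite trace_trans. Qed.

Lemma trace1_frob k y : trace 1 N (y ^+ (2 ^ k)) = trace 1 N y.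
Proof.
elim: k => [|k IHk]; first by rewrite expr1.
by rewrite -[k.+1]addn1 -frob_frob trace_frob ?mul1n.
Qed.

Lemma trace1_neq0 : exists y, trace 1 N y != 0.
Proof.
(* trace 1 N is a nonzero polynomial of degree 2^(N-1) < #|F|. *)
pose p : {poly F} := \sum_(k < N) 'X^(2 ^ k).
have p_trace y : p.[y] = trace 1 N y.
  by rewrite /p horner_sum; apply: eq_bigr => k _; rewrite hornerXn mul1n.
have N1_lt : (N.-1 < N)%N by rewrite prednK ?dim_gt0.
have size_p : (size p <= (2 ^ N.-1).+1)%N.
  apply: leq_trans (size_sum _ _ _) _; apply/bigmax_leqP => k _.
  by rewrite size_polyXn ltnS leq_exp2l // -ltnS prednK ?dim_gt0.
have p_neq0 : p != 0.
  apply/eqP => /(congr1 (fun p : {poly F} => p`_(2 ^ N.-1))) /eqP.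
  rewrite coef0 /p coef_sum (bigD1 (Ordinal N1_lt)) //= coefXn eqxx big1 ?addr0.
    by rewrite oner_eq0.
  move=> i /eqP i_neq; rewrite coefXn eqn_exp2l //.
  by case: eqP => // e; case: i_neq; apply: val_inj.
apply/existsP; apply: contraT; rewrite negb_exists => /forallP all_roots.
have := max_poly_roots p_neq0 (rs := enum F).
rewrite enum_uniq -cardE hcard; have -> : all (root p) (enum F).
  by apply/allP => y _; rewrite rootE p_trace; move/negPn: (all_roots y).
move=> /(_ isT isT) /leq_trans /(_ size_p).
have := expn_gt0 2 N.-1; rewrite -[in (2 ^ N)%N](prednK dim_gt0) expnS /=; lia.
Qed.

Lemma trace1_nondeg t : (forall u, trace 1 N (t * u) = 0) -> t = 0.
Proof.
move=> t_orth; apply/eqP; apply: contraT => t_neq0.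
by have [y] := trace1_neq0; rewrite -[y](mulVKf t_neq0) t_orth eqxx.
Qed.

Lemma trace_surj b s c : (b * s = N)%N -> c ^+ (2 ^ b) = c -> exists y, trace b s y = c.
Proof.
move=> hbs c_fixed; have [y0] := trace1_neq0.
rewrite (trace1_tower _ hbs); set t := trace b s y0 => Tt_neq0.
have t_neq0 : t != 0 by apply: contraNneq Tt_neq0 => ->; rewrite trace0.
exists (c / t * y0); rewrite traceZ ?divfK //.
by rewrite exprMn exprVn c_fixed frob_trace.
Qed.

Lemma trace_frobM_surj b s d c : (b * s = N)%N -> d != 0 -> c ^+ (2 ^ b) = c ->
  exists x, trace b s (x ^+ (2 ^ b) * d) = c.
Proof.
move=> hbs d_neq0 c_fixed; have [y <-] := trace_surj hbs c_fixed.
by exists ((y / d) ^+ (2 ^ (N - b))); rewrite frob_rootK ?divfK ?(factor_dim_le hbs).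
Qed.

Lemma trace_orth b s x : (b * s = N)%N ->
  (forall c, c ^+ (2 ^ b) = c -> trace 1 N (c * x) = 0) -> trace b s x = 0.
Proof.
move=> hbs x_orth; apply/eqP; apply: contraT => t_neq0.
have [y0] := trace1_neq0; rewrite (trace1_tower _ hbs).
pose c := trace b s y0 / trace b s x.
have c_fixed : c ^+ (2 ^ b) = c by rewrite exprMn exprVn !frob_trace.
rewrite -[trace b s y0](divfK t_neq0) -/c -(traceZ s x c_fixed) -(trace1_tower _ hbs).
by rewrite x_orth ?eqxx.
Qed.

Section Linearized.

Variable a : 'I_N -> F.

Lemma lin2D : {morph lin2 a : x y / x + y}.
Proof.
by move=> x y; rewrite /lin2 -big_split; apply: eq_bigr => j _; rewrite frobD mulrDr.
Qed.

Lemma lin20 : lin2 a 0 = 0.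
Proof. by rewrite /lin2 big1 // => j _; rewrite frob0 mulr0. Qed.

Lemma lin2_adjD : {morph lin2_adj a : x y / x + y}.
Proof.
by move=> x y; rewrite /lin2_adj -big_split; apply: eq_bigr => j _; rewrite mulrDr frobD.
Qed.

Lemma trace1_lin2_adj x y : trace 1 N (lin2 a x * y) = trace 1 N (x * lin2_adj a y).
Proof.
rewrite /lin2 /lin2_adj mulr_suml mulr_sumr !trace_sum; apply: eq_bigr => j _.
rewrite -[in RHS](trace1_frob j) exprMn frob_rootK 1?ltnW //.
by rewrite mulrA [_ * x ^+ _]mulrC.
Qed.

Lemma lin2_adj_inj : injective (lin2 a) -> injective (lin2_adj a).
Proof.
move=> L_inj; apply: additive_inj lin2_adjD _ => y L'y0.
have [g _ gK] := injF_bij L_inj.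
apply: trace1_nondeg => u.
by rewrite mulrC -[u]gK trace1_lin2_adj L'y0 mulr0 trace0.
Qed.

Lemma lin2_preim_fixed b : exists2 z, z != 0 & lin2 a z ^+ (2 ^ b) = lin2 a z.
Proof.
case: (pickP [pred z | (z != 0) && (lin2 a z == 0)]) =>
  [z /andP[z_neq0 /eqP Lz0] | L_ker].
  by exists z; rewrite // Lz0 frob0.
have [g _ gK] : bijective (lin2 a).
  apply/injF_bij/(additive_inj lin2D) => z Lz0; apply/eqP.
  by move: (L_ker z); rewrite /= Lz0 eqxx andbT => /negbFE.
exists (g 1); last by rewrite gK expr1n.
by apply: contraNneq (oner_neq0 F) => g1; rewrite -(gK 1) g1 lin20.
Qed.

Lemma lin2_preim_subfieldP b s b' s' :
  (b * s = N)%N -> (b' * s' = N)%N -> injective (lin2 a) ->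
  (forall z, lin2 a z ^+ (2 ^ b) = lin2 a z -> z ^+ (2 ^ b') = z) <->
  (forall x, trace b' s' (lin2_adj a x) = 0 -> trace b s x = 0).
Proof.
move=> hbs hbs' L_inj; have [g _ gK] := injF_bij L_inj; split.
  move=> preim_sub x T'x0; apply: (trace_orth hbs) => c c_fixed.
  rewrite -(gK c) trace1_lin2_adj (trace1_tower _ hbs').
  by rewrite traceZ ?T'x0 ?mulr0 ?trace0 // preim_sub // gK.
move=> ker_sub z Lz_fixed; have [g' _ g'K] := injF_bij (lin2_adj_inj L_inj).
apply/eqP; rewrite -subr_eq0 (GRing.subr_pchar2 hchar); apply/eqP.
apply: trace1_nondeg => u; pose v := u ^+ (2 ^ (N - b')).
have v_frob : v ^+ (2 ^ b') = u by rewrite frob_rootK ?(factor_dim_le hbs').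
have Tx0 : trace b s (g' (u + v)) = 0.
  by apply: ker_sub; rewrite g'K traceD -{1}v_frob trace_frob // addrr_pchar2.
have : trace 1 N (z * lin2_adj a (g' (u + v))) = 0.
  by rewrite -trace1_lin2_adj (trace1_tower _ hbs) traceZ // Tx0 mulr0 trace0.
rewrite g'K mulrDr traceD -(trace1_frob b' (z * v)) exprMn v_frob => <-.
by rewrite mulrDl traceD addrC.
Qed.

End Linearized.

Section QuadraticForm.

Variables m n : nat.
Hypothesis hmn : (m * n = N)%N.
Hypothesis n_even : ~~ odd n.
Local Notation q := (2 ^ m)%N.

Lemma half_dim : (m * 2 * n./2 = N)%N.
Proof. by rewrite -mulnA mul2n even_halfK. Qed.

Definition qform A x := trace m n (A * x ^+ q.+1).
Definition polar (A z : F) := A * z + (A * z ^+ q) ^+ q.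
Definition qform_lin2 A (a : 'I_N -> F) x := qform A x + lin2 a x.

Lemma qformD A x z :
  qform A (x + z) = qform A x + qform A z + trace m n (x ^+ q * polar A z).
Proof.
rewrite /qform /polar.
have -> : A * (x + z) ^+ q.+1 =
    A * x ^+ q.+1 + A * z ^+ q.+1 + (x ^+ q * (A * z) + A * x * z ^+ q).
  by rewrite !exprS frobD; ring.
have cross : trace m n (A * x * z ^+ q) = trace m n (x ^+ q * (A * z ^+ q) ^+ q).
  by rewrite -(trace_frob hmn) !exprMn; congr (trace m n _); ring.
by rewrite !traceD cross mulrDr traceD; ring.
Qed.

Lemma qform_lin2D A a x z : qform_lin2 A a (x + z) =
  qform_lin2 A a x + qform_lin2 A a z + trace m n (x ^+ q * polar A z).
Proof. by rewrite /qform_lin2 qformD lin2D; ring. Qed.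

Lemma qform_lin2_0 A a : qform_lin2 A a 0 = 0.
Proof. by rewrite /qform_lin2 /qform expr0n mulr0 trace0 lin20 addr0. Qed.

Lemma inj_qform_lin2P A a : injective (qform_lin2 A a) <->
  forall z, z != 0 -> lin2 a z ^+ q = lin2 a z ->
    polar A z = 0 /\ qform_lin2 A a z != 0.
Proof.
split=> [f_inj z z_neq0 Lz_fixed | f_nondeg x y fxy].
  have fz_fixed : qform_lin2 A a z ^+ q = qform_lin2 A a z.
    by rewrite /qform_lin2 frobD Lz_fixed /qform frob_trace.
  split; last first.
    by apply: contra z_neq0 => /eqP fz0; apply/eqP/f_inj; rewrite fz0 qform_lin2_0.
  apply/eqP; apply: contraNT z_neq0 => polar_neq0.
  have [x Tx] := trace_frobM_surj hmn polar_neq0 fz_fixed.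
  apply/eqP/(addrI x)/f_inj.
  by rewrite addr0 qform_lin2D Tx -addrA addrr_pchar2 // addr0.
apply/eqP; rewrite -subr_eq0 (GRing.subr_pchar2 hchar); apply/negPn/negP => z_neq0.
move: fxy; rewrite -[y](addKr_pchar2 hchar x) qform_lin2D; set z := x + y in z_neq0 *.
rewrite -addrA -{1}[qform_lin2 A a x]addr0 => /addrI/esym/eqP.
rewrite addr_eq0 (oppr_pchar2 hchar) => /eqP fz.
have Lz_fixed : lin2 a z ^+ q = lin2 a z.
  rewrite -(addKr_pchar2 hchar (qform A z) (lin2 a z)) -/(qform_lin2 A a z) fz.
  by rewrite frobD /qform !frob_trace.
have [polar0] := f_nondeg z z_neq0 Lz_fixed.
by rewrite fz polar0 mulr0 trace0 eqxx.
Qed.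

Lemma polar1_eq0 z : polar 1 z = 0 <-> z ^+ (2 ^ (m * 2)) = z.
Proof.
rewrite /polar !mul1r frob_frob addnn -muln2.
split=> [/eqP | ->]; last exact: addrr_pchar2.
by rewrite addr_eq0 (oppr_pchar2 hchar) => /eqP <-.
Qed.

Lemma qform1_subfield z : z ^+ (2 ^ (m * 2)) = z -> qform 1 z = 0.
Proof.
move=> z_fixed; rewrite /qform mul1r trace_fixed; last first.
  by rewrite exprS exprMn frob_frob addnn -muln2 z_fixed mulrC.
by rewrite -(even_halfK n_even) -mul2n mulrnA (mulrn_pchar hchar) mul0rn.
Qed.

Lemma inj_qform1_lin2P a : injective (qform_lin2 1 a) <->
  injective (lin2 a) /\
  forall x, trace (m * 2) n./2 (lin2_adj a x) = 0 -> trace m n x = 0.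
Proof.
rewrite inj_qform_lin2P; split=> [f_nondeg | [L_inj ker_sub] z z_neq0 Lz_fixed].
  have preim_sub z : lin2 a z ^+ q = lin2 a z -> z ^+ (2 ^ (m * 2)) = z.
    move=> Lz_fixed; have [-> | z_neq0] := eqVneq z 0; first by rewrite frob0.
    by have [/polar1_eq0] := f_nondeg z z_neq0 Lz_fixed.
  have L_inj : injective (lin2 a).
    apply: additive_inj (lin2D a) _ => z Lz0; apply/eqP; apply: contraT => z_neq0.
    have Lz_fixed : lin2 a z ^+ q = lin2 a z by rewrite Lz0 frob0.
    have [_] := f_nondeg z z_neq0 Lz_fixed.
    by rewrite /qform_lin2 qform1_subfield ?preim_sub // Lz0 addr0 eqxx.
  by split; last exact/(lin2_preim_subfieldP hmn half_dim).
have z_fixed := (lin2_preim_subfieldP hmn half_dim L_inj).2 ker_sub z Lz_fixed.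
split; first exact/polar1_eq0.
rewrite /qform_lin2 qform1_subfield // add0r; apply: contra z_neq0 => /eqP Lz0.
by apply/eqP/L_inj; rewrite Lz0 lin20.
Qed.

Lemma not_inj_qform_lin2 A a :
  A != 0 -> A ^+ ((q ^ n).-1 %/ q.+1) != 1 -> ~ injective (qform_lin2 A a).
Proof.
move=> A_neq0 A_nonsq /inj_qform_lin2P f_nondeg.
have [z z_neq0 /(f_nondeg z z_neq0) [/eqP polar0 _]] := lin2_preim_fixed a m.
move: polar0; rewrite addr_eq0 (oppr_pchar2 hchar) => /eqP Azq.
pose c := A * z ^+ q.+1.
have c_fixed : c ^+ q = c by rewrite /c exprS mulrCA exprMn -Azq; ring.
have c_neq0 : c != 0 by rewrite mulf_neq0 ?expf_neq0.
have c_unit : c ^+ q.-1 = 1 := expf_predn_eq1 c_neq0 (expn_gt0 2 m) c_fixed.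
have z_unit : z ^+ (q ^ n).-1 = 1.
  rewrite -expnM hmn -hcard (expf_predn_eq1 z_neq0) ?expf_card //.
  by rewrite hcard expn_gt0.
have A_eq : A = c / z ^+ q.+1 by rewrite mulfK ?expf_neq0.
move: A_nonsq; rewrite (predn_exp_even q n_even) mulKn // A_eq expr_div_n -exprM.
by rewrite -(predn_exp_even q n_even) z_unit exprM c_unit expr1n divr1 eqxx.
Qed.

End QuadraticForm.

End Frobenius.

Lemma Tr_trace (F : finFieldType) m n (y : F) : Tr (2 ^ m) n y = trace m n y.
Proof. by apply: eq_bigr => i _; rewrite expnM. Qed.

Lemma Tr2_trace (F : finFieldType) m n (y : F) : Tr2 (2 ^ m) n y = trace (m * 2) n./2 y.
Proof. by apply: eq_bigr => i _; rewrite !expnM. Qed.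

Theorem mainTheorem10 (m n : nat) (F : finFieldType)
  (hm : (1 <= m)%N) (hn : ~~ odd n)
  (hchar : 2%N \in [pchar F]) (hcard : #|F| = (2 ^ (m * n))%N) :
  let q := (2 ^ m)%N in
  (forall a : 'I_(m * n) -> F,
     bijective (fun x : F => Tr q n (x ^+ q.+1) + lin2 a x) <->
     (kerF (fun x => Tr2 q n (lin2_adj a x)) \subset kerF (Tr q n)
      /\ kerF (lin2 a) = [set 0])) /\
  (forall (a : 'I_(m * n) -> F) (A : F), A != 0 ->
     A ^+ ((q ^ n).-1 %/ q.+1) != 1 ->
     ~ bijective (fun x : F => Tr q n (A * x ^+ q.+1) + lin2 a x)).
Proof.
move=> q; have hmn : (m * n = m * n)%N by [].
have f_eq (A : F) (a : 'I_(m * n) -> F) :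
  (fun x => Tr q n (A * x ^+ q.+1) + lin2 a x) =1 qform_lin2 m n A a.
  by move=> x; rewrite Tr_trace.
split=> [a | a A A_neq0 A_nonsq /bij_inj f_inj]; last first.
  apply: (not_inj_qform_lin2 hchar hcard hmn hn A_neq0 A_nonsq).
  exact: eq_inj f_inj (f_eq A a).
have f1_eq : (fun x => Tr q n (x ^+ q.+1) + lin2 a x) =1 qform_lin2 m n 1 a.
  by move=> x; rewrite -f_eq mul1r.
have kerL_eq1 := kerF_additive_eq1 (lin2D hchar a).
have inj_f1P := inj_qform1_lin2P hchar hcard hmn hn a.
split=> [/bij_inj/eq_inj/(_ f1_eq)/inj_f1P[L_inj ker_sub] |
         [/kerF_subsetP ker_sub /kerL_eq1 L_inj]].
  split; last exact/kerL_eq1.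
  by apply/kerF_subsetP => x; rewrite Tr_trace Tr2_trace; exact: ker_sub.
apply/injF_bij/(eq_inj _ (fsym f1_eq))/inj_f1P; split=> // x.
by have := ker_sub x; rewrite Tr_trace Tr2_trace.
Qed.
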